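(* Let $(V,E,\sigma)$ be an influence graph and let $\mu : V \rightarrow \{+,-\}$ be a (partial) vertex labeling. If the disjunctive logic program $P_C\cup\tau((V,E,\sigma),\mu)$ has an answer set, then $(V,E,\sigma)$ and $\mu$ are consistent.
   Context: An influence graph is a triple $(V,E,\sigma)$ where $V$ is a finite set of vertices, $E\subseteq V\times V$ is a set of directed edges (an edge from $j$ to $i$ is written $j\rightarrow i$), and $\sigma : E\rightarrow\{+,-\}$ is a partial labeling of the edges; in addition, some vertices of $V$ are designated as input vertices. Signs are multiplied as numbers ($++=--=+$, $+-=-+=-$). Given a partial vertex labeling $\mu: V\rightarrow\{+,-\}$, the pair $(V,E,\sigma)$ and $\mu$ are called consistent if there exist total extensions $\sigma':E\rightarrow\{+,-\}$ of $\sigma$ and $\mu':V\rightarrow\{+,-\}$ of $\mu$ such that for every non-input vertex $i\in V$ there is an edge $j\rightarrow i$ in $E$ with $\mu'(i)=\mu'(j)\sigma'(j,i)$. Answer set semantics: a disjunctive logic program is a set of rules $a_1;\dots;a_l \leftarrow b_1,\dots,b_m,\mathit{not}\ c_1,\dots,\mathit{not}\ c_n$ (with $l=0$ giving an integrity constraint, whose empty head is false). Rules with (capitalized) variables stand for all their ground instances obtained by substituting constants occurring in the program; a built-in comparison $S\neq T$ in a body keeps only instances where the substituted constants differ. For a set $X$ of ground atoms, the reduct $P^X$ consists of $\{a_1,\dots,a_l\}\leftarrow b_1,\dots,b_m$ for each ground rule with $\{c_1,\dots,c_n\}\cap X=\emptyset$; $X$ is an answer set of $P$ if it is a $\subseteq$-minimal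 model of $P^X$ (a rule is satisfied if some head atom is in $X$ whenever all $b_k$ are in $X$). Here $+$ and $-$ are constants and vertex names are constants. The instance $\tau((V,E,\sigma),\mu)$ is the set of facts: $\mathit{vertex}(i)$ for each $i\in V$; $\mathit{edge}(j,i)$ for each $j\rightarrow i$ in $E$; $\mathit{observedE}(j,i,s)$ whenever $\sigma(j,i)=s$ is defined; $\mathit{observedV}(i,s)$ whenever $\mu(i)=s$ is defined; $\mathit{input}(i)$ for each input vertex $i$. The program $P_C$ consists of the rules $\mathit{labelV}(V,+);\mathit{labelV}(V,-)\leftarrow \mathit{vertex}(V)$; $\mathit{labelE}(U,V,+);\mathit{labelE}(U,V,-)\leftarrow \mathit{edge}(U,V)$; $\mathit{labelV}(V,S)\leftarrow \mathit{observedV}(V,S)$; $\mathit{labelE}(U,V,S)\leftarrow \mathit{observedE}(U,V,S)$; $\mathit{receive}(V,+)\leftarrow \mathit{labelE}(U,V,S),\mathit{labelV}(U,S)$; $\mathit{receive}(V,-)\leftarrow \mathit{labelE}(U,V,S),\mathit{labelV}(U,T),S\neq T$; $\leftarrow \mathit{labelV}(V,S),\mathit{not}\ \mathit{receive}(V,S),\mathit{not}\ \mathit{input}(V)$. *)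

From mathcomp Require Import all_boot.
From Stdlib Require Import List.
Import ListNotations.
Set Implicit Arguments. Unset Strict Implicit. Unset Printing Implicit Defensive.

Inductive sign := Plus | Minus.
Definition smul (a b : sign) : sign :=
  match a, b with
  | Plus, Plus | Minus, Minus => Plus
  | _, _ => Minus
  end.

(* An influence graph over the finite vertex set V:
   - E : the edge relation, E j i means j -> i;
   - sigma : partial edge labeling (None = undefined), only defined on edges;
   - inp : the designated input vertices. *)
Definition partial_edge_labeling (V : finType) (E : rel V) (sigma : V -> V -> option sign) : Prop :=
  forall j i s, sigma j i = Some s -> E j i.

Definition consistent (V : finType) (E : rel V) (sigma : V -> V -> option sign)
    (inp : pred V) (mu : V -> option sign) : Prop :=
  exists (sigma' : V -> V -> sign) (mu' : V -> sign),
    (forall j i s, E j i -> sigma j i = Some s -> sigma' j i = s) /\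
    (forall i s, mu i = Some s -> mu' i = s) /\
    (forall i, ~~ inp i -> exists j, E j i /\ mu' i = smul (mu' j) (sigma' j i)).

Inductive const (V : Type) := CV of V | CS of sign.
Arguments CS {V}.

Inductive atom (V : Type) :=
| a_vertex of const V
| a_edge of const V & const V
| a_observedE of const V & const V & const V
| a_observedV of const V & const V
| a_input of const V
| a_labelV of const V & const V
| a_labelE of const V & const V & const V
| a_receive of const V & const V.

(* A ground rule  a_1;...;a_l <- b_1,...,b_m, not c_1,...,not c_n  *)
Record rule (A : Type) := Rule { head : list A; pos : list A; neg : list A }.

Definition program (A : Type) := rule A -> Prop.
Definition interp (A : Type) := A -> Prop.

Definition model_of_reduct (A : Type) (P : program A) (X Y : interp A) : Prop :=
  forall r, P r -> (forall c, In c (neg r) -> ~ X c) ->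
    (forall b, In b (pos r) -> Y b) -> exists2 a, In a (head r) & Y a.

Definition answer_set (A : Type) (P : program A) (X : interp A) : Prop :=
  model_of_reduct P X X /\
  forall Y : interp A, (forall a, Y a -> X a) -> model_of_reduct P X Y ->
    forall a, X a -> Y a.

(* Ground instances of P_C (variables range over all constants). *)
Inductive P_C (V : Type) : program (atom V) :=
| PC1 (v : const V) :
    P_C (Rule [a_labelV v (CS Plus); a_labelV v (CS Minus)] [a_vertex v] [])
| PC2 (u v : const V) :
    P_C (Rule [a_labelE u v (CS Plus); a_labelE u v (CS Minus)] [a_edge u v] [])
| PC3 (v s : const V) :
    P_C (Rule [a_labelV v s] [a_observedV v s] [])
| PC4 (u v s : const V) :
    P_C (Rule [a_labelE u v s] [a_observedE u v s] [])
| PC5 (u v s : const V) :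
    P_C (Rule [a_receive v (CS Plus)] [a_labelE u v s; a_labelV u s] [])
| PC6 (u v s t : const V) : s <> t ->
    P_C (Rule [a_receive v (CS Minus)] [a_labelE u v s; a_labelV u t] [])
| PC7 (v s : const V) :
    P_C (Rule [] [a_labelV v s] [a_receive v s; a_input v]).

Inductive tau (V : finType) (E : rel V) (sigma : V -> V -> option sign)
    (inp : pred V) (mu : V -> option sign) : program (atom V) :=
| T_vertex (i : V) : tau E sigma inp mu (Rule [a_vertex (CV i)] [] [])
| T_edge (j i : V) : E j i -> tau E sigma inp mu (Rule [a_edge (CV j) (CV i)] [] [])
| T_obsE (j i : V) (s : sign) : sigma j i = Some s ->
    tau E sigma inp mu (Rule [a_observedE (CV j) (CV i) (CS s)] [] [])
| T_obsV (i : V) (s : sign) : mu i = Some s ->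
    tau E sigma inp mu (Rule [a_observedV (CV i) (CS s)] [] [])
| T_input (i : V) : inp i -> tau E sigma inp mu (Rule [a_input (CV i)] [] []).

Definition union_prog (A : Type) (P Q : program A) : program A := fun r => P r \/ Q r.

(* Read the intended labelings off an answer set X: take the observed sign
   where there is one, and otherwise the sign chosen by X through the
   disjunctive guessing rules.  The interpretation [intended] consisting exactly
   of the atoms that these total labelings make true is contained in X and is a
   model of the reduct P^X, so by minimality X = intended.  For a non-input
   vertex i, the constraint forces receive(i, mu'(i)) into X, hence into
   [intended], and there this atom means precisely an incoming edge j -> i
   with mu'(i) = mu'(j) sigma'(j,i). *)

From mathcomp Require Import all_boot.
From Stdlib Require Import List Classical ClassicalEpsilon.
Import ListNotations.

Set Implicit Arguments.
Unset Strict Implicit.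
Unset Printing Implicit Defensive.

Lemma smul_same (a : sign) : smul a a = Plus.
Proof. by case: a. Qed.

Lemma smul_diff (a b : sign) : a <> b -> smul a b = Minus.
Proof. by case: a; case: b. Qed.

Definition sign_of (obs : option sign) (guessPlus : Prop) : sign :=
  match obs with
  | Some s => s
  | None => if excluded_middle_informative guessPlus then Plus else Minus
  end.

Lemma sign_of_chosen (obs : option sign) (lab : sign -> Prop) :
  (forall s, obs = Some s -> lab s) -> lab Plus \/ lab Minus ->
  lab (sign_of obs (lab Plus)).
Proof.
case: obs => [s /(_ s erefl) //|_ [lP|lM]] /=;
  by case: excluded_middle_informative.
Qed.

Section Reduct.
Variables (A : Type) (P : program A) (X Y : interp A).
Hypothesis modelY : model_of_reduct P X Y.

Lemma reduct_disj (hs p : list A) :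
  P (Rule hs p []) -> (forall b, In b p -> Y b) -> exists2 a, In a hs & Y a.
Proof. by move=> Pr; apply: modelY Pr _. Qed.

Lemma reduct_definite (h : A) (p : list A) :
  P (Rule [h] p []) -> (forall b, In b p -> Y b) -> Y h.
Proof. by move=> Pr /(reduct_disj Pr) [a [<-|[]]]. Qed.

Lemma reduct_fact (h : A) : P (Rule [h] [] []) -> Y h.
Proof. by move=> Pr; apply: reduct_definite Pr _. Qed.

Lemma reduct_constraint (p n : list A) :
  P (Rule [] p n) -> (forall b, In b p -> Y b) -> exists2 c, In c n & X c.
Proof.
move=> Pr Hp; apply: NNPP => Hn.
have [a [] //] := modelY Pr (fun c Hc Xc => Hn (ex_intro2 _ _ c Hc Xc)) Hp.
Qed.

Lemma reduct_guess (obs : option sign) (lab obsAt : sign -> A) (g : A) :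
  P (Rule [lab Plus; lab Minus] [g] []) -> Y g ->
  (forall s, obs = Some s -> P (Rule [lab s] [obsAt s] []) /\ Y (obsAt s)) ->
  Y (lab (sign_of obs (Y (lab Plus)))).
Proof.
move=> Pguess Yg Pobs; apply: (sign_of_chosen (lab := Y \o lab)).
  move=> s /Pobs [Pr Yo]; apply: reduct_definite Pr _.
  by move=> b [<-|[]].
have [|a Ha Ya] := reduct_disj Pguess; first by move=> b [<-|[]].
by case: Ha Ya => [<-|[<-|[]]]; [left|right].
Qed.

End Reduct.

Lemma model_of_reduct_union (A : Type) (P Q : program A) (X Y : interp A) :
  model_of_reduct P X Y -> model_of_reduct Q X Y ->
  model_of_reduct (union_prog P Q) X Y.
Proof. by move=> MP MQ r [Pr|Qr]; [apply: MP | apply: MQ]. Qed.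

Section AnswerSet.
Variables (V : finType) (E : rel V) (sigma : V -> V -> option sign)
  (inp : pred V) (mu : V -> option sign) (X : interp (atom V)).

Local Notation Prog := (union_prog (@P_C V) (tau E sigma inp mu)).

Definition mu' (i : V) : sign := sign_of (mu i) (X (a_labelV (CV i) (CS Plus))).

Definition sigma' (j i : V) : sign :=
  sign_of (sigma j i) (X (a_labelE (CV j) (CV i) (CS Plus))).

Definition intended (a : atom V) : Prop :=
  match a with
  | a_vertex (CV i) => True
  | a_edge (CV j) (CV i) => E j i
  | a_observedE (CV j) (CV i) (CS s) => sigma j i = Some s
  | a_observedV (CV i) (CS s) => mu i = Some s
  | a_input (CV i) => inp i
  | a_labelV (CV i) (CS s) => s = mu' i
  | a_labelE (CV j) (CV i) (CS s) => E j i /\ s = sigma' j i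
  | a_receive (CV i) (CS s) => exists2 j, E j i & s = smul (mu' j) (sigma' j i)
  | _ => False
  end.

Lemma intended_model_tau : model_of_reduct (tau E sigma inp mu) X intended.
Proof.
move=> r Tr _ _; case: Tr => [i|j i Eji|j i s Hs|i s Hs|i Hi];
  by eexists; [left|].
Qed.

Section Model.
Hypothesis modelX : model_of_reduct Prog X X.

Lemma tau_fact_in (a : atom V) : tau E sigma inp mu (Rule [a] [] []) -> X a.
Proof. move=> Ta; exact: (reduct_fact modelX (or_intror Ta)). Qed.

Lemma labelV_mu' (i : V) : X (a_labelV (CV i) (CS (mu' i))).
Proof.
apply: (reduct_guess modelX (lab := fun s => a_labelV (CV i) (CS s))
                            (or_introl (PC1 (CV i)))).
  by apply: tau_fact_in; constructor.
by move=> s obs; split; [left; constructor | apply: tau_fact_in; constructor].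
Qed.

Lemma labelE_sigma' (j i : V) : E j i -> X (a_labelE (CV j) (CV i) (CS (sigma' j i))).
Proof.
move=> Eji.
apply: (reduct_guess modelX (lab := fun s => a_labelE (CV j) (CV i) (CS s))
                            (or_introl (PC2 (CV j) (CV i)))).
  by apply: tau_fact_in; constructor.
by move=> s obs; split; [left; constructor | apply: tau_fact_in; constructor].
Qed.

Lemma receive_in (j i : V) :
  E j i -> X (a_receive (CV i) (CS (smul (mu' j) (sigma' j i)))).
Proof.
move=> Eji; have lE := labelE_sigma' Eji; have lV := labelV_mu' j.
have [same|diff] := classic (sigma' j i = mu' j).
  rewrite same smul_same.
  apply: (reduct_definite modelX (or_introl (PC5 (CV j) (CV i) (CS (mu' j))))).
  by move=> b [<-|[<-|[]]] //; rewrite -same.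
rewrite smul_diff; last by move=> e; apply: diff.
have neq : CS (sigma' j i) <> CS (mu' j) :> const V by case.
apply: (reduct_definite modelX (or_introl (PC6 (CV j) (CV i) neq))).
by move=> b [<-|[<-|[]]].
Qed.

Lemma intended_sub (a : atom V) : intended a -> X a.
Proof.
case: a => [c|c d|c d e|c d|c|c d|c d e|c d].
- by case: c => // i _; apply: tau_fact_in; constructor.
- by case: c => // j; case: d => // i Eji; apply: tau_fact_in; constructor.
- by case: c => // j; case: d => // i; case: e => // s Hs; apply: tau_fact_in; constructor.
- by case: c => // i; case: d => // s Hs; apply: tau_fact_in; constructor.
- by case: c => // i Hi; apply: tau_fact_in; constructor.
- by case: c => // i; case: d => // s /= ->; apply: labelV_mu'.
- by case: c => // j; case: d => // i; case: e => // s /= [Eji ->]; apply: labelE_sigma'.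
- by case: c => // i; case: d => // s /= [j Eji ->]; apply: receive_in.
Qed.

Lemma intended_model_P_C :
  partial_edge_labeling E sigma -> model_of_reduct (@P_C V) X intended.
Proof.
move=> edge_labels r Pr.
case: Pr => [v|u v|v s|u v s|u v s|u v s t Hst|v s] /= Hneg Hpos;
  move: (Hpos _ (or_introl erefl)).
- case: v {Hpos} => // i _.
  by exists (a_labelV (CV i) (CS (mu' i))); first by case: (mu' i); [left | right; left].
- case: u v {Hpos} => // j [] // i Eji.
  exists (a_labelE (CV j) (CV i) (CS (sigma' j i))) => //.
  by case: (sigma' j i); [left | right; left].
- case: v s {Hpos} => // i [] // s /= obs.
  by exists (a_labelV (CV i) (CS s)); [left | rewrite /= /mu' obs].
- case: u v s {Hpos} => // j [] // i [] // s /= obs.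
  exists (a_labelE (CV j) (CV i) (CS s)); first by left.
  by split; [exact: edge_labels obs | rewrite /sigma' obs].
- move: (Hpos _ (or_intror (or_introl erefl))).
  case: u v s {Hpos} => // j [] // i [] // s /= -> [Eji sE].
  by exists (a_receive (CV i) (CS Plus)); [left | exists j; rewrite // -sE smul_same].
- move: (Hpos _ (or_intror (or_introl erefl))).
  case: u v s t Hst {Hpos} => // j [] // i [] // s [] // t Hst /= tV [Eji sE].
  exists (a_receive (CV i) (CS Minus)); first by left.
  by exists j; rewrite // -sE -tV smul_diff // => ts; apply: Hst; rewrite ts.
- (* The constraint survives in the reduct, so its body cannot lie in X. *)
  move=> /intended_sub body.
  have [|a []] := modelX (or_introl (PC7 v s)) Hneg.
  by move=> b [<-|[]].
Qed.

Lemma receive_mu' (i : V) :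
  ~ X (a_input (CV i)) -> X (a_receive (CV i) (CS (mu' i))).
Proof.
move=> not_input.
have [|c] := reduct_constraint modelX (or_introl (PC7 (CV i) (CS (mu' i)))).
  by move=> b [<-|[]]; apply: labelV_mu'.
by case=> [<-|[<-|[]]].
Qed.

End Model.
End AnswerSet.

Theorem theorem1 (V : finType) (E : rel V) (sigma : V -> V -> option sign)
    (inp : pred V) (mu : V -> option sign) :
  partial_edge_labeling E sigma ->
  (exists X : interp (atom V), answer_set (union_prog (@P_C V) (tau E sigma inp mu)) X) ->
  consistent E sigma inp mu.
Proof.
move=> edge_labels [X [modelX minimal]].
have X_intended : forall a, X a -> intended E sigma inp mu X a.
  apply: minimal; first exact: intended_sub.
  apply: model_of_reduct_union; last exact: intended_model_tau.
  exact: intended_model_P_C.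
exists (sigma' sigma X), (mu' mu X); split; [|split].
- by move=> j i s _ obs; rewrite /sigma' obs.
- by move=> i s obs; rewrite /mu' obs.
- move=> i not_input.
  have [|j Eji ->] := X_intended _ (receive_mu' modelX (i := i) _); last by exists j.
  by move=> /X_intended /=; apply/negP.
Qed.
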